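(* The LDP-FPMiner algorithm described below satisfies $\epsilon$-local differential privacy: every user's transaction is used in exactly one randomized report, and the map from the user's transaction to that report is an $\epsilon$-locally differentially private algorithm; all remaining computations are performed by the analyst on the reports only.
   Context: A randomized algorithm $\mathcal{A}$ satisfies $\epsilon$-local differential privacy ($\epsilon$-LDP) if for all inputs $t_i,t_j$ and every possible output $\mathcal{O}$, $\Pr[\mathcal{A}(t_i)=\mathcal{O}]\le e^{\epsilon}\Pr[\mathcal{A}(t_j)=\mathcal{O}]$. Optimized Local Hashing (OLH) with budget $\epsilon$ over a finite domain $D$: with $g=\lceil e^\epsilon+1\rceil$, a user with value $u\in D$ picks a hash $H$ uniformly from a universal family $D\to[g]$, sets $x=H(u)$ and reports $\langle H,y\rangle$ with $y=x$ with probability $\frac{e^\epsilon}{e^\epsilon+g-1}$ and $y=i$ with probability $\frac{1}{e^\epsilon+g-1}$ for each $i\ne x$; this is $\epsilon$-LDP. LDP-FPMiner$(\mathcal{T},\mathcal{X},k,\epsilon)$: users (each holding a transaction $t\subseteq\mathcal{X}$) are randomly partitioned into three disjoint groups $G_1,G_2,G_3$. (1) With $G_1$, the SVIM protocol computes a set $S'$ of $k$ frequent items and their estimated frequencies; in SVIM each user of $G_1$ sends exactly one report produced by OLH with budget $\epsilon$ (about one item sampled from her transaction, or about the size of her transaction pruned to a candidate domain, or about one item sampled from her pruned transaction padded with dummy items). (2) Each user of $G_2$ reports the number $|t\cap S'|$ via OLH with budget $\epsilon$; the analyst sets $M$ to the estimated 80th percentile of these numbers. (3) With $G_3$, a noisy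 FP-tree is built: $G_3$ is split into $M$ disjoint groups $g_1,\dots,g_M$; each user keeps the items of her transaction in $S'$ sorted by descending estimated frequency; at level $l$ the analyst forms (from previously released estimates only) a candidate set $C_l$ of prefixes, and each user of $g_l$ reports once, via OLH with budget $\epsilon$ over $C_l\cup\{\dagger\}$, her first $l$ items (or $\dagger$ if not in $C_l$). (4) The analyst mines the noisy tree with the FP-growth algorithm and releases $k$ itemsets. *)

From HB Require Import structures.
From mathcomp Require Import all_boot all_order all_algebra.
From mathcomp Require Import reals.
From mathcomp Require Import sequences exp.
Set Implicit Arguments. Unset Strict Implicit. Unset Printing Implicit Defensive.
Import Order.TTheory GRing.Theory Num.Theory.
Local Open Scope ring_scope.

(* A randomized algorithm with inputs in I and finitely many outputs O is
   modelled by its output distribution: A t o = Pr[A(t) = o]. *)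
Definition eps_LDP (R : realType) (eps : R) (I : Type) (O : finType)
  (A : I -> O -> R) : Prop :=
  forall (ti tj : I) (o : O), A ti o <= expR eps * A tj o.

Definition olh_g (R : realType) (eps : R) : nat := `|Num.ceil (expR eps + 1)|%N.

Record hfam (D : finType) (g : nat) := HFam {
  hT :> finType;
  hash : hT -> D -> 'I_g;
  hT_nonempty : (0 < #|hT|)%N;
  hT_universal : forall x y : D, x != y ->
     (#|[set h : hT | hash h x == hash h y]| * g <= #|hT|)%N }.

(* OLH with budget eps over D: H uniform in the family, x = H(u), y = x w.p.
   e^eps/(e^eps+g-1) and y = i w.p. 1/(e^eps+g-1) for each i <> x.
   The report is the pair <H, y>. *)
Definition olh (R : realType) (eps : R) (D : finType)
  (hf : hfam D (olh_g eps)) (u : D) (o : (hT hf * 'I_(olh_g eps))%type) : R :=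
  let den := expR eps + (olh_g eps)%:R - 1 in
  (#|hT hf|%:R)^-1 *
  (if o.2 == hash o.1 u then expR eps / den else den^-1).

(* A user's report: a local randomized encoding of the transaction into D
   (enc t v = Pr[encoding of t = v]), followed by OLH over D. *)
Definition enc_then_olh (R : realType) (eps : R) (T : Type) (D : finType)
  (enc : T -> D -> R) (hf : hfam D (olh_g eps)) (t : T)
  (o : (hT hf * 'I_(olh_g eps))%type) : R :=
  \sum_(v : D) enc t v * @olh R eps D hf v o.

Section Encodings.
Variables (R : realType) (X : finType).

(* Padding-and-sampling: the transaction t is pruned to C, padded with
   dummy items to length L (L >= 1, here L = Lm1.+1), and one element of the
   padded transaction is sampled uniformly; dummies are 'I_L. *)
Definition ps_enc (C : {set X}) (Lm1 : nat) (t : {set X})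
  (v : (X + 'I_Lm1.+1)%type) : R :=
  let t' := t :&: C in
  let k := #|t'| in
  match v with
  | inl x => if x \in t' then ((maxn k Lm1.+1)%:R)^-1 else 0
  | inr i => if (i < Lm1.+1 - k)%N then (Lm1.+1%:R)^-1 else 0
  end.

Definition det_enc (T : Type) (D : finType) (f : T -> D) (t : T) (v : D) : R :=
  if v == f t then 1 else 0.

Definition size_in (C : {set X}) (t : {set X}) : 'I_(#|C|.+1) :=
  inord #|t :&: C|.

(* The user's items of S' sorted by descending estimated frequency: the analyst
   publishes S' as the list [order] already sorted; at level l the user
   reports her first l items if she has at least l items and they form a
   prefix in C_l, and the dummy None (= dagger) otherwise. *)
Definition level_prefix (order : seq X) (l : nat) (Cl : seq (seq X))
  (t : {set X}) : option (seq_sub Cl) :=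
  let s := [seq x <- order | x \in t] in
  if (l <= size s)%N then insub (take l s) else None.

End Encodings.

(* Every user of LDP-FPMiner belongs to exactly one group and sends exactly one
   report; the public parameters of that report (candidate sets, padding
   length, S', its frequency order, C_l, the hash family) are chosen by the
   analyst from the reports of other users only. *)
Inductive role (X : finType) (g : nat) : Type :=
  (* G1 / SVIM: one item sampled from the transaction pruned to C, padded *)
  | RSample (C : {set X}) (Lm1 : nat) (hf : hfam (X + 'I_Lm1.+1)%type g)
  | RSvimSize (C : {set X}) (hf : hfam 'I_(#|C|.+1) g)
  | RSize (Sp : {set X}) (hf : hfam 'I_(#|Sp|.+1) g)
  (* G3, group g_l: first l items of t \cap S' (sorted), or dagger *)
  | RLevel (order : seq X) (l : nat) (Cl : seq (seq X))
           (hf : hfam (option (seq_sub Cl)) g).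

Definition report_type (X : finType) (g : nat) (r : role X g) : finType :=
  match r with
  | RSample _ _ hf => (hT hf * 'I_g)%type
  | RSvimSize _ hf => (hT hf * 'I_g)%type
  | RSize _ hf => (hT hf * 'I_g)%type
  | RLevel _ _ _ hf => (hT hf * 'I_g)%type
  end.

Definition user_report (R : realType) (eps : R) (X : finType)
  (r : role X (olh_g eps)) : {set X} -> report_type r -> R :=
  match r with
  | RSample C Lm1 hf => @enc_then_olh R eps {set X} _ (@ps_enc R X C Lm1) hf
  | RSvimSize C hf => @enc_then_olh R eps {set X} _ (det_enc R (size_in C)) hf
  | RSize Sp hf => @enc_then_olh R eps {set X} _ (det_enc R (size_in Sp)) hf
  | RLevel order l Cl hf => @enc_then_olh R eps {set X} _ (det_enc R (level_prefix order l Cl)) hf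
  end.

(* The LDP-FPMiner protocol for n users: a partition of the users into roles
   (each user gets exactly one role, i.e. sends exactly one report). *)
Definition ldp_fpminer_user_mech (R : realType) (eps : R) (X : finType) (n : nat)
  (assign : 'I_n -> role X (olh_g eps)) (i : 'I_n) :
  {set X} -> report_type (assign i) -> R :=
  @user_report R eps X (assign i).

(* Every user's report is OLH applied to a randomized encoding of her transaction.
   For a fixed report <H, y>, the OLH probability of any input is either
   1 / (|H| den) or e^eps / (|H| den), where den = e^eps + g - 1, so two inputs
   differ by a factor of at most e^eps; averaging over the encoding distribution
   of the transaction preserves this bound. *)
From HB Require Import structures.
From mathcomp Require Import all_boot all_order all_algebra.
From mathcomp Require Import reals.
From mathcomp Require Import sequences exp.
From mathcomp Require Import lra.
Set Implicit Arguments. Unset Strict Implicit. Unset Printing Implicit Defensive.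
Import Order.TTheory GRing.Theory Num.Theory.
Local Open Scope ring_scope.

Definition is_distr (R : numDomainType) (D : finType) (p : D -> R) : Prop :=
  (forall v, 0 <= p v) /\ \sum_v p v = 1.

Lemma ler_mixture (R : numDomainType) (D : finType) (p q f : D -> R) (e : R) :
  is_distr p -> is_distr q -> (forall v w, f v <= e * f w) ->
  \sum_v p v * f v <= e * \sum_v q v * f v.
Proof.
move=> [p_ge0 sum_p] [q_ge0 sum_q] f_le.
have mix_le w : \sum_v p v * f v <= e * f w.
  apply: (@le_trans _ _ (\sum_v p v * (e * f w))).
    by apply: ler_sum => v _; apply: ler_wpM2l.
  by rewrite -big_distrl /= sum_p mul1r.
rewrite -[leLHS]mul1r -sum_q big_distrl /= big_distrr /=.
by apply: ler_sum => w _; rewrite mulrCA; apply: ler_wpM2l.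
Qed.

Lemma eps_LDP_mixture (R : realType) (eps : R) (T : Type) (D O : finType)
  (M : D -> O -> R) (enc : T -> D -> R) :
  eps_LDP eps M -> (forall t, is_distr (enc t)) ->
  eps_LDP eps (fun t o => \sum_v enc t v * M v o).
Proof. by move=> M_LDP enc_distr ti tj o; apply: ler_mixture. Qed.

Lemma olh_g_gt0 (R : realType) (eps : R) : (0 < olh_g eps)%N.
Proof. by rewrite absz_gt0 ceil_neq0 ltr_wpDl ?expR_ge0 ?orbT. Qed.

Section OLH.
Variables (R : realType) (eps : R) (D : finType) (hf : hfam D (olh_g eps)).
Hypothesis eps_ge0 : 0 <= eps.

Let den : R := expR eps + (olh_g eps)%:R - 1.
Let c : R := (#|hT hf|%:R)^-1.

Lemma olh_bounds u o : c / den <= @olh R eps D hf u o <= c * (expR eps / den).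
Proof.
have e_ge1 : 1 <= expR eps by rewrite -expR0 ler_expR.
have den_gt0 : 0 < den.
  have g_ge1 : 1 <= (olh_g eps)%:R :> R by rewrite ler1n olh_g_gt0.
  by rewrite /den; have e_gt0 := expR_gt0 eps; lra.
have c_ge0 : 0 <= c by rewrite invr_ge0.
have lo_le_up : c / den <= c * (expR eps / den).
  by rewrite ler_wpM2l // ler_pMl ?invr_gt0.
by rewrite /olh -/den -/c; case: ifP => _; rewrite lo_le_up lexx.
Qed.

Lemma olh_eps_LDP : eps_LDP eps (@olh R eps D hf).
Proof.
move=> ti tj o.
have /andP[_ le_up] := olh_bounds ti o.
have /andP[lo_le _] := olh_bounds tj o.
apply: (le_trans le_up).
by rewrite mulrCA ler_wpM2l ?expR_ge0.
Qed.

End OLH.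

Lemma det_enc_distr (R : realType) (T : Type) (D : finType) (f : T -> D) t :
  is_distr (det_enc R f t).
Proof.
split=> [v|]; first by rewrite /det_enc; case: ifP.
rewrite /det_enc (bigD1 (f t)) //= eqxx big1 ?addr0 //.
by move=> v /negbTE ->.
Qed.

Lemma ps_enc_distr (R : realType) (X : finType) (C : {set X}) (Lm1 : nat) t :
  is_distr (ps_enc R C (Lm1:=Lm1) t).
Proof.
split=> [[x|i]|]; try by rewrite /ps_enc; case: ifP; rewrite ?invr_ge0.
set k := #|t :&: C|; set L := Lm1.+1.
have sum_items : \sum_(x : X) ps_enc R C (Lm1:=Lm1) t (inl x) = k%:R / (maxn k L)%:R.
  by rewrite -big_mkcond /= sumr_const [RHS]mulr_natl.
have sum_dummies : \sum_(i : 'I_L) ps_enc R C (Lm1:=Lm1) t (inr i) = (L - k)%:R / L%:R.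
  rewrite -big_mkcond /= -(big_mkord (fun i => i < L - k)%N (fun _ => (L%:R : R)^-1)).
  rewrite -(@big_nat_widen _ _ _ 0 (L - k) L xpredT) ?leq_subr // sumr_const_nat subn0.
  by rewrite [RHS]mulr_natl.
rewrite big_sumType /= sum_items sum_dummies.
have L_neq0 : (L%:R : R) != 0 by rewrite pnatr_eq0.
have [k_le | L_lt] := leqP k L.
  by rewrite -mulrDl -natrD subnKC // mulfV.
have -> : (L - k = 0)%N by apply/eqP; rewrite subn_eq0 ltnW.
by rewrite mul0r addr0 mulfV // pnatr_eq0 -lt0n (leq_ltn_trans _ L_lt).
Qed.

Theorem theorem4p3 (R : realType) (eps : R) (heps : 0 < eps) (X : finType)
  (n : nat) (assign : 'I_n -> role X (olh_g eps)) (i : 'I_n) :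
  @eps_LDP R eps {set X} _ (@ldp_fpminer_user_mech R eps X n assign i).
Proof.
have olh_LDP D hf := @olh_eps_LDP R eps D hf (ltW heps).
rewrite /ldp_fpminer_user_mech.
case: (assign i) => [C Lm1 hf|C hf|Sp hf|ord l Cl hf] /=;
  apply: eps_LDP_mixture; try exact: olh_LDP.
- exact: ps_enc_distr.
- exact: det_enc_distr.
- exact: det_enc_distr.
- exact: det_enc_distr.
Qed.
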